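(* Let $A$ and $B$ be alternating sign hypermatrices of order $n$. Then $A\preceq_B B$ if and only if $\Xi(A)_{i,j,k}\ge \Xi(B)_{i,j,k}$ for all $i,j,k\in\{0,1,\dots,n\}$.
   Context: Let $[n]=\{1,\dots,n\}$. A hypermatrix of order $n$ is an integer array $A=(A_{i,j,k})_{i,j,k\in[n]}$; its lines are the $n$-tuples obtained by fixing two of the three indices. An alternating sign hypermatrix of order $n$ is a hypermatrix with entries in $\{0,1,-1\}$ such that in every line the nonzero entries alternate in sign, beginning and ending with $+1$. $\Xi(A)$ is the array indexed by $\{0,\dots,n\}^3$ with $\Xi(A)_{i,j,k}=\sum_{a=1}^i\sum_{b=1}^j\sum_{c=1}^k A_{a,b,c}$. For $i_1<i_2$, $j_1<j_2$, $k_1<k_2$ in $[n]$, the positive T-block on $\{i_1,i_2\}\times\{j_1,j_2\}\times\{k_1,k_2\}$ is the hypermatrix that is zero outside these eight positions, with entries $+1$ at $(i_1,j_1,k_1),(i_2,j_2,k_1),(i_1,j_2,k_2),(i_2,j_1,k_2)$ and $-1$ at $(i_1,j_2,k_1),(i_2,j_1,k_1),(i_1,j_1,k_2),(i_2,j_2,k_2)$. For hypermatrices $A,B$ of order $n$, the Bruhat order is $A\preceq_B B$ iff $A-B$ is a (possibly empty) sum of positive T-blocks. *)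

From mathcomp Require Import all_boot all_order all_algebra.
Set Implicit Arguments. Unset Strict Implicit. Unset Printing Implicit Defensive.
Import Order.TTheory GRing.Theory Num.Theory.
Local Open Scope ring_scope.

(* A hypermatrix of order n: integer array indexed by [n]^3, here 'I_n ^3
   (index a : 'I_n stands for a+1 in [n]). *)
Definition hypermatrix (n : nat) := 'I_n -> 'I_n -> 'I_n -> int.

Definition alt_line (s : seq int) : bool :=
  let t := [seq x <- s | x != 0] in
  [&& all (fun x => (x == 0) || (x == 1) || (x == -1)) s,
      t != [::],
      head 0 t == 1,
      last 0 t == 1 &
      sorted (fun x y => y == - x) t].

Definition ASHM (n : nat) (A : hypermatrix n) : Prop :=
  (forall j k : 'I_n, alt_line [seq A i j k | i <- enum 'I_n]) /\
  (forall i k : 'I_n, alt_line [seq A i j k | j <- enum 'I_n]) /\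
  (forall i j : 'I_n, alt_line [seq A i j k | k <- enum 'I_n]).

(* Xi(A)_{i,j,k} for i,j,k in {0..n}: sum over a<=i, b<=j, c<=k (1-based),
   i.e. over 0-based indices a < i, b < j, c < k. *)
Definition Xi (n : nat) (A : hypermatrix n) (i j k : nat) : int :=
  \sum_(a < n | (a < i)%N) \sum_(b < n | (b < j)%N) \sum_(c < n | (c < k)%N)
     A a b c.

Definition Tblock (n : nat) (i1 i2 j1 j2 k1 k2 : 'I_n) : hypermatrix n :=
  fun a b c =>
    let s1 : int := if a == i1 then 1 else if a == i2 then -1 else 0 in
    let s2 : int := if b == j1 then 1 else if b == j2 then -1 else 0 in
    let s3 : int := if c == k1 then 1 else if c == k2 then -1 else 0 in
    s1 * s2 * s3.

Definition tb_valid (n : nat) (t : 'I_n * 'I_n * 'I_n * 'I_n * 'I_n * 'I_n) : bool :=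
  let: (i1, i2, j1, j2, k1, k2) := t in
  [&& (i1 < i2)%N, (j1 < j2)%N & (k1 < k2)%N].

Definition Tblock_of (n : nat) (t : 'I_n * 'I_n * 'I_n * 'I_n * 'I_n * 'I_n) :
  hypermatrix n :=
  let: (i1, i2, j1, j2, k1, k2) := t in Tblock i1 i2 j1 j2 k1 k2.

Definition bruhat_le (n : nat) (A B : hypermatrix n) : Prop :=
  exists ts : seq ('I_n * 'I_n * 'I_n * 'I_n * 'I_n * 'I_n),
    all (@tb_valid n) ts /\
    forall a b c : 'I_n,
      A a b c - B a b c = \sum_(t <- ts) Tblock_of t a b c.

From mathcomp Require Import all_boot all_order all_algebra.
Import Order.TTheory GRing.Theory Num.Theory.
Local Open Scope ring_scope.

(* Xi is linear, and the Xi of the positive T-block on {i1,i2} x {j1,j2} x {k1,k2}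
   factors into three one-dimensional prefix sums of the pattern (+1 at the smaller
   index, -1 at the larger one), each nonnegative; this gives the forward direction.
   Conversely, D = A - B is the mixed third difference of X = Xi D, and summation by
   parts in each coordinate turns this into
     D = sum_(a,b,c) X(a+1,b+1,c+1) * (unit T-block on {a,a+1} x {b,b+1} x {c,c+1}).
   All line sums of A and B equal 1, so X vanishes on the faces i = n, j = n, k = n:
   only genuine unit T-blocks occur, with multiplicities X(a+1,b+1,c+1) >= 0. *)

Lemma sum_alt_path (x : int) (t : seq int) :
  path (fun x y => y == - x) x t ->
  \sum_(y <- x :: t) y = (if odd (size t) then 0 else x) /\
  last x t = (if odd (size t) then - x else x).
Proof.
elim: t x => [|y t IH] x /=; first by rewrite big_seq1.
case/andP=> /eqP -> /IH[sum_t last_t].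
rewrite big_cons sum_t last_t opprK.
by case: (odd (size t)); rewrite /= ?addr0 ?addrN.
Qed.

Lemma sum_alt_line (s : seq int) : alt_line s -> \sum_(x <- s) x = 1.
Proof.
case/and5P=> _ nz_s head_s last_s alt_s.
have -> : \sum_(x <- s) x = \sum_(x <- [seq x <- s | x != 0]) x.
  by rewrite big_filter [RHS]big_mkcond; apply: eq_bigr => x _; case: eqP => // ->.
move: nz_s head_s last_s alt_s; case: [seq x <- s | x != 0] => [|x t] //= _.
move=> /eqP -> /eqP last_t /sum_alt_path[-> last_eq].
by move: last_t; rewrite last_eq; case: (odd (size t)).
Qed.

Section Hypermatrices.

Set Implicit Arguments.
Unset Strict Implicit.

Variable n : nat.
Local Notation tb_datum := ('I_n * 'I_n * 'I_n * 'I_n * 'I_n * 'I_n)%type.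
Implicit Types (A B D : hypermatrix n) (i j k : nat) (t : tb_datum).

Lemma sum_sub_alt_lines (f g : 'I_n -> int) :
  alt_line [seq f a | a <- enum 'I_n] -> alt_line [seq g a | a <- enum 'I_n] ->
  \sum_(a < n) (f a - g a) = 0.
Proof.
have sum_line (h : 'I_n -> int) :
    alt_line [seq h a | a <- enum 'I_n] -> \sum_(a < n) h a = 1.
  by move/sum_alt_line; rewrite big_map big_enum.
by move=> /sum_line sum_f /sum_line sum_g; rewrite sumrB sum_f sum_g subrr.
Qed.

Lemma eq_Xi A B i j k :
  (forall a b c, A a b c = B a b c) -> Xi A i j k = Xi B i j k.
Proof.
by move=> eqAB; apply: eq_bigr => a _; apply: eq_bigr => b _; apply: eq_bigr.
Qed.

Lemma Xi_sub A B i j k :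
  Xi (fun a b c => A a b c - B a b c) i j k = Xi A i j k - Xi B i j k.
Proof.
rewrite /Xi -sumrB; apply: eq_bigr => a _.
by rewrite -sumrB; apply: eq_bigr => b _; rewrite -sumrB.
Qed.

Lemma Xi_sum (I : Type) (r : seq I) (F : I -> hypermatrix n) i j k :
  Xi (fun a b c => \sum_(t <- r) F t a b c) i j k = \sum_(t <- r) Xi (F t) i j k.
Proof.
rewrite /Xi.
under eq_bigr => a _ do under eq_bigr => b _ do rewrite exchange_big.
under eq_bigr => a _ do rewrite exchange_big.
by rewrite exchange_big.
Qed.

Definition pair_sign (u v a : 'I_n) : int :=
  if a == u then 1 else if a == v then -1 else 0.

Lemma pair_sign_ge0 (u v a : 'I_n) : a != v -> 0 <= pair_sign u v a.
Proof. by rewrite /pair_sign => /negbTE ->; case: ifP. Qed.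

Lemma sum_pair_sign_ge0 (u v : 'I_n) i :
  (u < v)%N -> 0 <= \sum_(a < n | (a < i)%N) pair_sign u v a.
Proof.
move=> lt_uv; have [lt_vi|le_iv] := ltnP v i; last first.
  apply: sumr_ge0 => a lt_ai; apply: pair_sign_ge0.
  by apply: contraTneq lt_ai => ->; rewrite -leqNgt.
have ne_uv : u != v by rewrite neq_ltn lt_uv.
rewrite (bigD1 v) // (bigD1 u) /=; last by rewrite ne_uv (ltn_trans lt_uv).
rewrite {1 2}/pair_sign eq_sym (negbTE ne_uv) !eqxx addKr.
by apply: sumr_ge0 => a /andP[/andP[_ ne_av] _]; apply: pair_sign_ge0.
Qed.

Lemma Xi_prod (f g h : 'I_n -> int) i j k :
  Xi (fun a b c => f a * g b * h c) i j k =
  (\sum_(a < n | (a < i)%N) f a) * (\sum_(b < n | (b < j)%N) g b) *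
  (\sum_(c < n | (c < k)%N) h c).
Proof.
rewrite /Xi -mulrA mulr_suml; apply: eq_bigr => a _.
rewrite mulr_suml mulr_sumr; apply: eq_bigr => b _.
by rewrite !mulr_sumr; apply: eq_bigr => c _; rewrite !mulrA.
Qed.

Lemma Xi_Tblock_ge0 t i j k : tb_valid t -> 0 <= Xi (Tblock_of t) i j k.
Proof.
case: t => [[[[[i1 i2] j1] j2] k1] k2] /and3P[lt_i lt_j lt_k].
rewrite (Xi_prod (pair_sign i1 i2) (pair_sign j1 j2) (pair_sign k1 k2)).
by rewrite !mulr_ge0 ?sum_pair_sign_ge0.
Qed.

Lemma bruhat_le_Xi A B i j k : bruhat_le A B -> Xi B i j k <= Xi A i j k.
Proof.
case=> ts [valid_ts AB]; rewrite -subr_ge0 -Xi_sub (eq_Xi _ _ _ AB) Xi_sum.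
rewrite big_seq; apply: sumr_ge0 => t /(allP valid_ts); exact: Xi_Tblock_ge0.
Qed.

Lemma sum_prefix_step (g : 'I_n -> int) (z : 'I_n) :
  \sum_(c < n | (c < z.+1)%N) g c - \sum_(c < n | (c < z)%N) g c = g z.
Proof.
rewrite (bigD1 z) //= (eq_bigl (fun c : 'I_n => (c < z)%N)) ?addrK // => c.
by rewrite ltnS -val_eqE; case: ltngtP.
Qed.

Lemma Xi_step_k D i j (z : 'I_n) :
  Xi D i j z.+1 - Xi D i j z =
  \sum_(a < n | (a < i)%N) \sum_(b < n | (b < j)%N) D a b z.
Proof.
rewrite /Xi -sumrB; apply: eq_bigr => a _.
by rewrite -sumrB; apply: eq_bigr => b _; apply: sum_prefix_step.
Qed.

Lemma Xi_mixed_difference D (x y z : 'I_n) :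
  ((Xi D x.+1 y.+1 z.+1 - Xi D x.+1 y.+1 z) - (Xi D x.+1 y z.+1 - Xi D x.+1 y z)) -
  ((Xi D x y.+1 z.+1 - Xi D x y.+1 z) - (Xi D x y z.+1 - Xi D x y z)) = D x y z.
Proof.
rewrite !Xi_step_k -!sumrB.
under eq_bigr do rewrite sum_prefix_step.
under [X in _ - X]eq_bigr do rewrite sum_prefix_step.
exact: (sum_prefix_step (fun a => D a y z)).
Qed.

(* For a = n-1 only the +1 remains, a+1 being out of range. *)
Definition consec_sign (a x : 'I_n) : int := ((a : nat) == x)%:R - (a.+1 == x)%:R.

Lemma sum_consec_sign (F : nat -> int) (x : 'I_n) :
  F 0%N = 0 -> \sum_(a < n) consec_sign a x * F a.+1 = F x.+1 - F x.
Proof.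
move=> F0; rewrite /consec_sign.
under eq_bigr do rewrite mulrBl !mulr_natl !mulrb.
rewrite sumrB -!big_mkcond (big_ord1_eq _ (fun a => F a.+1)) ltn_ord; congr (_ - _).
have := big_ord1_eq +%R F x n.+1.
rewrite ltnS ltnW // => <-.
by rewrite [RHS]big_mkcond big_ord_recl /= F0 if_same add0r -big_mkcond.
Qed.

Lemma Xi_0jk D j k : Xi D 0 j k = 0.
Proof. exact: big_pred0. Qed.

Lemma Xi_i0k D i k : Xi D i 0 k = 0.
Proof. by apply: big1 => a _; apply: big_pred0. Qed.

Lemma Xi_ij0 D i j : Xi D i j 0 = 0.
Proof. by apply: big1 => a _; apply: big1 => b _; apply: big_pred0. Qed.

Lemma Xi_inversion D (x y z : 'I_n) :
  D x y z = \sum_(a < n) \sum_(b < n) \sum_(c < n)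
    consec_sign a x * (consec_sign b y * (consec_sign c z * Xi D a.+1 b.+1 c.+1)).
Proof.
under eq_bigr => a _ do under eq_bigr => b _ do
  rewrite -!mulr_sumr (sum_consec_sign (F := fun c => Xi D a.+1 b.+1 c)) ?Xi_ij0 //.
under eq_bigr => a _ do
  rewrite -mulr_sumr (sum_consec_sign (F := fun b => Xi D a.+1 b z.+1 - Xi D a.+1 b z))
          ?Xi_i0k ?subrr //.
rewrite (sum_consec_sign (F := fun a => (Xi D a y.+1 z.+1 - Xi D a y.+1 z) -
                                   (Xi D a y z.+1 - Xi D a y z))) ?Xi_0jk ?subrr //.
by rewrite Xi_mixed_difference.
Qed.

Lemma Xi_njk D j k : (forall b c, \sum_(a < n) D a b c = 0) -> Xi D n j k = 0.
Proof.
move=> sumD0; rewrite /Xi exchange_big; apply: big1 => b _.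
rewrite exchange_big; apply: big1 => c _.
by rewrite (eq_bigl xpredT) => [|a]; rewrite ?sumD0 ?ltn_ord.
Qed.

Lemma Xi_ink D i k : (forall a c, \sum_(b < n) D a b c = 0) -> Xi D i n k = 0.
Proof.
move=> sumD0; rewrite /Xi; apply: big1 => a _.
rewrite exchange_big; apply: big1 => c _.
by rewrite (eq_bigl xpredT) => [|b]; rewrite ?sumD0 ?ltn_ord.
Qed.

Lemma Xi_ijn D i j : (forall a b, \sum_(c < n) D a b c = 0) -> Xi D i j n = 0.
Proof.
move=> sumD0; rewrite /Xi; apply: big1 => a _; apply: big1 => b _.
by rewrite (eq_bigl xpredT) => [|c]; rewrite ?sumD0 ?ltn_ord.
Qed.

Definition unit_block (a b c : 'I_n) : tb_datum :=
  (a, insubd a a.+1, b, insubd b b.+1, c, insubd c c.+1).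

Lemma pair_sign_succ (a x : 'I_n) :
  (a.+1 < n)%N -> pair_sign a (insubd a a.+1) x = consec_sign a x.
Proof.
move=> lt_an; rewrite /pair_sign /consec_sign -[x == a]val_eqE.
rewrite -val_eqE val_insubd lt_an /= ![_ == val x]eq_sym.
have [->|_] := eqVneq (val x) a; first by rewrite ltn_eqF ?subr0.
by case: eqP.
Qed.

Lemma Tblock_unit_block (a b c x y z : 'I_n) :
  [&& (a.+1 < n)%N, (b.+1 < n)%N & (c.+1 < n)%N] ->
  Tblock_of (unit_block a b c) x y z =
  consec_sign a x * (consec_sign b y * consec_sign c z).
Proof.
by case/and3P=> lt_a lt_b lt_c; rewrite mulrA -!pair_sign_succ.
Qed.

Section Decomposition.

Variable D : hypermatrix n.
Hypothesis Xi_ge0 :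
  forall i j k, (i <= n)%N -> (j <= n)%N -> (k <= n)%N -> 0 <= Xi D i j k.
Hypothesis sum_i0 : forall b c, \sum_(a < n) D a b c = 0.
Hypothesis sum_j0 : forall a c, \sum_(b < n) D a b c = 0.
Hypothesis sum_k0 : forall a b, \sum_(c < n) D a b c = 0.

Definition Xi_mult (a b c : 'I_n) : nat :=
  if [&& (a.+1 < n)%N, (b.+1 < n)%N & (c.+1 < n)%N]
  then `|Xi D a.+1 b.+1 c.+1|%N else 0.

Definition unit_blocks : seq tb_datum :=
  flatten [seq nseq (Xi_mult u.1.1 u.1.2 u.2) (unit_block u.1.1 u.1.2 u.2)
          | u <- enum {: 'I_n * 'I_n * 'I_n}].

Lemma unit_blocks_valid : all (@tb_valid n) unit_blocks.
Proof.
apply/allP=> t /flattenP[s /mapP[[[a b] c] _ ->]].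
rewrite mem_nseq /Xi_mult /= => /andP[+ /eqP->].
case: ifP => // /and3P[lt_a lt_b lt_c] _.
by rewrite /tb_valid /unit_block !val_insubd lt_a lt_b lt_c !ltnSn.
Qed.

Lemma consec_sign_Xi_mult (a b c x y z : 'I_n) :
  consec_sign a x * (consec_sign b y * (consec_sign c z * Xi D a.+1 b.+1 c.+1)) =
  Tblock_of (unit_block a b c) x y z *+ Xi_mult a b c.
Proof.
rewrite /Xi_mult; case: ifP => [interior | boundary].
  by rewrite Tblock_unit_block // -mulr_natr natz gez0_abs ?Xi_ge0 // !mulrA.
suff -> : Xi D a.+1 b.+1 c.+1 = 0 by rewrite !mulr0 mulr0n.
move: boundary; have := ltn_ord a; rewrite leq_eqVlt => /orP[/eqP-> _|-> /=].
  exact: Xi_njk.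
have := ltn_ord b; rewrite leq_eqVlt => /orP[/eqP-> _|-> /=].
  exact: Xi_ink.
have := ltn_ord c; rewrite leq_eqVlt => /orP[/eqP-> _|-> //].
exact: Xi_ijn.
Qed.

Lemma unit_blocks_sum (x y z : 'I_n) :
  D x y z = \sum_(t <- unit_blocks) Tblock_of t x y z.
Proof.
rewrite Xi_inversion !pair_bigA big_flatten big_map big_enum /=.
apply: eq_bigr => -[[a b] c] _ /=.
by rewrite big_nseq iter_addr_0 consec_sign_Xi_mult.
Qed.

End Decomposition.

End Hypermatrices.

Theorem mainTheorem5 (n : nat) (A B : hypermatrix n) :
  ASHM A -> ASHM B ->
  (bruhat_le A B <->
   (forall i j k : nat, (i <= n)%N -> (j <= n)%N -> (k <= n)%N ->
      Xi B i j k <= Xi A i j k)).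
Proof.
move=> [Ai [Aj Ak]] [Bi [Bj Bk]].
split=> [AB i j k _ _ _ | Xi_le]; first exact: bruhat_le_Xi.
exists (unit_blocks (fun a b c => A a b c - B a b c)).
split; first exact: unit_blocks_valid.
apply: unit_blocks_sum => [i j k ni nj nk | b c | a c | a b].
- by rewrite Xi_sub subr_ge0 Xi_le.
- exact: sum_sub_alt_lines (Ai b c) (Bi b c).
- exact: sum_sub_alt_lines (Aj a c) (Bj a c).
- exact: sum_sub_alt_lines (Ak a b) (Bk a b).
Qed.
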